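(* Let $N$ be an $\mathbb{N}^n$-graded submodule of $S^k=Se_1\oplus\cdots\oplus Se_k$ (with $\deg e_i=0$) that is generated in squarefree degrees. Then the initial module $\mathrm{in}(N)$ with respect to the monomial order $\mathbf x^a e_i<\mathbf x^b e_j$ iff ($j<i$) or ($j=i$ and $\mathbf x^a<_{\mathrm{lex}}\mathbf x^b$) is an $\mathbb{N}^n$-graded submodule of $S^k$ of the form $I_1\oplus\cdots\oplus I_k$ (i.e. $I_1e_1\oplus\cdots\oplus I_ke_k$), where each $I_j$ is a monomial ideal of $S$ generated in squarefree degrees.
   Context: $S=\mathbb{k}[x_1,\dots,x_n]$ with fine $\mathbb{N}^n$-grading; $<_{\mathrm{lex}}$ is the usual lexicographic order on monomials of $S$. The initial module $\mathrm{in}(N)$ is the submodule generated by the leading terms (with respect to the given monomial order on $S^k$) of the elements of $N$. A degree is squarefree if all its entries are in $\{0,1\}$. *)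

From HB Require Import structures.
From mathcomp Require Import all_boot all_order all_algebra.
From mathcomp Require Import mpoly.
Set Implicit Arguments. Unset Strict Implicit. Unset Printing Implicit Defensive.
Import GRing.Theory.
Local Open Scope ring_scope.

Section Defs.
Variables (F : fieldType) (n k : nat).

(* Elements of the free module S^k = S e_1 (+) ... (+) S e_k
   (e_{i+1} is indexed by i : 'I_k). *)
Definition vec := {ffun 'I_k -> {mpoly F[n]}}.

Definition smul (f : {mpoly F[n]}) (v : vec) : vec := [ffun i => f * v i].

Definition span (G : vec -> Prop) (w : vec) : Prop :=
  exists s : seq ({mpoly F[n]} * vec),
    (forall p, p \in s -> G p.2) /\ w = \sum_(p <- s) smul p.1 p.2.

Definition is_submodule (N : vec -> Prop) : Prop :=
  [/\ N 0, (forall v w, N v -> N w -> N (v + w)) &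
      (forall f v, N v -> N (smul f v))].

Definition homogeneous (a : 'X_{1..n}) (v : vec) : Prop :=
  forall i, exists c : F, v i = c *: 'X_[a].

Definition homog_comp (a : 'X_{1..n}) (v : vec) : vec :=
  [ffun i => (v i)@_a *: 'X_[a]].

(* N is an N^n-graded submodule: closed under taking homogeneous components. *)
Definition fine_graded (N : vec -> Prop) : Prop :=
  forall v a, N v -> N (homog_comp a v).

Definition squarefree (a : 'X_{1..n}) : Prop := forall i : 'I_n, (a i <= 1)%N.

Definition generated_in_sqfree_degrees (N : vec -> Prop) : Prop :=
  forall w, N w <-> span (fun v => N v /\ exists a, squarefree a /\ homogeneous a v) w.

(* Lexicographic order on monomials: x^a <_lex x^b (x_1 > x_2 > ... > x_n). *)
Definition lexlt (a b : 'X_{1..n}) : Prop :=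
  exists i : 'I_n, (forall j : 'I_n, (j < i)%N -> a j = b j) /\ (a i < b i)%N.

Definition termlt (t u : 'I_k * 'X_{1..n}) : Prop :=
  (u.1 < t.1)%N \/ (u.1 = t.1 /\ lexlt t.2 u.2).

Definition is_lead_pos (v : vec) (t : 'I_k * 'X_{1..n}) : Prop :=
  (v t.1)@_t.2 != 0 /\
  forall u : 'I_k * 'X_{1..n}, (v u.1)@_u.2 != 0 -> u <> t -> termlt u t.

Definition term_vec (i : 'I_k) (c : F) (a : 'X_{1..n}) : vec :=
  [ffun j => if j == i then c *: 'X_[a] else 0].

Definition is_lead_term (v : vec) (t : vec) : Prop :=
  exists ia, is_lead_pos v ia /\ t = term_vec ia.1 ((v ia.1)@_ia.2) ia.2.

Definition initial_module (N : vec -> Prop) (w : vec) : Prop :=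
  span (fun t => exists v, N v /\ v != 0 /\ is_lead_term v t) w.

Definition monomial_ideal (M : 'X_{1..n} -> Prop) (f : {mpoly F[n]}) : Prop :=
  exists s : seq ({mpoly F[n]} * 'X_{1..n}),
    (forall p, p \in s -> M p.2) /\ f = \sum_(p <- s) p.1 * 'X_[p.2].

End Defs.

From Pilot Require Import Defs.
From HB Require Import structures.
From mathcomp Require Import all_boot all_order all_algebra.
From mathcomp Require Import mpoly.
Set Implicit Arguments. Unset Strict Implicit. Unset Printing Implicit Defensive.
Import GRing.Theory.
Local Open Scope ring_scope.

(* I_j consists of the squarefree b such that some w in N has x^b e_j as the
   largest term of multidegree b.  Such terms are leading terms of the degree-b
   components of w, hence lie in in(N).  Conversely, if x^a e_i is the leading
   term of v in N, write v as a combination of squarefree homogeneous elements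
   g of degree c; replacing each x^(a-c) coefficient by x^(b-c), with b the
   squarefree part of a, gives w in N whose x^b coefficients are those of v at
   x^a, so b is in I_i and x^a e_i lies in I_i e_i. *)

Lemma mcoeffMXE (F : fieldType) (n : nat) (p : {mpoly F[n]}) m a :
  (p * 'X_[m])@_a = if (m <= a)%MM then p@_(a - m)%MM else 0.
Proof.
case: ifP => hma; first by rewrite -{1}(submK hma) addmC mcoeffMX.
apply/eqP; rewrite mcoeff_eq0; apply/negP.
rewrite (perm_mem (msuppMX p m)) => /mapP [m' _ ea].
by rewrite ea lem_addr in hma.
Qed.

Section Span.
Variables (F : fieldType) (n k : nat).
Local Notation V := (vec F n k).
Variable G : V -> Prop.

Lemma span_gen v : G v -> Defs.span G v.
Proof.
move=> hv; exists [:: (1, v)]; split; first by move=> p; rewrite inE => /eqP ->.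
by rewrite big_seq1; apply/ffunP => i; rewrite ffunE mul1r.
Qed.

Lemma span0 : Defs.span G 0.
Proof. by exists [::]; split => //; rewrite big_nil. Qed.

Lemma spanD v w : Defs.span G v -> Defs.span G w -> Defs.span G (v + w).
Proof.
move=> [s [hs ->]] [t [ht ->]]; exists (s ++ t); split; last by rewrite big_cat.
by move=> p; rewrite mem_cat => /orP [/hs|/ht].
Qed.

Lemma span_smul f v : Defs.span G v -> Defs.span G (smul f v).
Proof.
move=> [s [hs ->]]; exists [seq (f * q.1, q.2) | q <- s]; split.
  by move=> p /mapP [q /hs hq ->].
apply/ffunP => i; rewrite !ffunE !sum_ffunE big_map mulr_sumr.
by apply: eq_bigr => p _; rewrite !ffunE mulrA.
Qed.

Lemma span_sum (I : eqType) (r : seq I) (v : I -> V) :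
  (forall x, x \in r -> Defs.span G (v x)) -> Defs.span G (\sum_(x <- r) v x).
Proof.
move=> hr; rewrite big_seq; apply: big_ind => //; [exact: span0 | exact: spanD].
Qed.

End Span.

Section MonomialIdeal.
Variables (F : fieldType) (n : nat) (M : 'X_{1..n} -> Prop).
Local Notation S := {mpoly F[n]}.

Lemma monomial_ideal0 : monomial_ideal M (0 : S).
Proof. by exists [::]; split => //; rewrite big_nil. Qed.

Lemma monomial_idealD (f g : S) :
  monomial_ideal M f -> monomial_ideal M g -> monomial_ideal M (f + g).
Proof.
move=> [s [hs ->]] [t [ht ->]]; exists (s ++ t); split; last by rewrite big_cat.
by move=> p; rewrite mem_cat => /orP [/hs|/ht].
Qed.

Lemma monomial_idealMl (h f : S) : monomial_ideal M f -> monomial_ideal M (h * f).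
Proof.
move=> [s [hs ->]]; exists [seq (h * q.1, q.2) | q <- s]; split.
  by move=> p /mapP [q /hs hq ->].
by rewrite big_map mulr_sumr; apply: eq_bigr => p _; rewrite mulrA.
Qed.

Lemma monomial_idealX a : M a -> monomial_ideal M ('X_[a] : S).
Proof.
move=> ha; exists [:: (1, a)]; split; first by move=> p; rewrite inE => /eqP ->.
by rewrite big_seq1 mul1r.
Qed.

Lemma monomial_ideal_multiple (f : S) a b :
  M b -> (b <= a)%MM -> monomial_ideal M (f * 'X_[a]).
Proof.
move=> hb hba; rewrite -(submK hba) mpolyXD mulrA.
exact/monomial_idealMl/monomial_idealX.
Qed.

End MonomialIdeal.

Section SquarefreePart.
Variable n : nat.

Definition sqfree_part (a : 'X_{1..n}) : 'X_{1..n} := [multinom minn (a t) 1 | t < n].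

Lemma sqfree_part_sqfree a : squarefree (sqfree_part a).
Proof. by move=> t; rewrite mnmE geq_minr. Qed.

Lemma sqfree_part_le a : (sqfree_part a <= a)%MM.
Proof. by apply/mnm_lepP => t; rewrite mnmE geq_minl. Qed.

Lemma sqfree_part_ge a c : squarefree c -> (c <= a)%MM -> (c <= sqfree_part a)%MM.
Proof.
move=> hc hca; apply/mnm_lepP => t; rewrite mnmE leq_min (hc t) andbT.
exact: (mnm_lepP hca t).
Qed.

End SquarefreePart.

Section InitialModule.
Variables (F : fieldType) (n k : nat) (N : vec F n k -> Prop).
Local Notation S := {mpoly F[n]}.
Local Notation V := (vec F n k).

Definition sqfree_lead_exp (j : 'I_k) (b : 'X_{1..n}) : Prop :=
  squarefree b /\ exists w : V, [/\ N w,
    forall l : 'I_k, (l < j)%N -> (w l)@_b = 0 & (w j)@_b != 0].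

Lemma is_lead_pos_homog_comp (w : V) (j : 'I_k) b :
  (forall l : 'I_k, (l < j)%N -> (w l)@_b = 0) -> (w j)@_b != 0 ->
  is_lead_pos (homog_comp b w) (j, b).
Proof.
move=> hlt hj.
have coefE l a : (homog_comp b w l)@_a = (w l)@_b * (b == a)%:R.
  by rewrite ffunE mcoeffZ mcoeffX.
split => /=; first by rewrite coefE eqxx mulr1.
move=> [l a] /=; rewrite coefE; have [<-|] := eqVneq b a; last by rewrite mulr0 eqxx.
rewrite mulr1 => hl hne; left => /=.
case: (ltngtP l j) => [ljl|//|ejl]; first by rewrite hlt ?eqxx in hl.
by case: hne; congr pair; apply: val_inj.
Qed.

Lemma initial_module_term_vec j b :
  fine_graded N -> sqfree_lead_exp j b -> initial_module N (term_vec j 1 b).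
Proof.
move=> hfg [_ [w [hw hlt hj]]].
have hlead := @is_lead_pos_homog_comp w j b hlt hj.
set u := homog_comp b w in hlead; set c := (u j)@_b.
have hc : c != 0 by case: hlead.
have hu0 : u != 0 by apply: contraNneq hc => u0; rewrite /c u0 ffunE mcoeff0.
have hin : initial_module N (term_vec j c b).
  by apply: span_gen; exists u; split; [exact: hfg | split => //; exists (j, b)].
have -> : term_vec j 1 b = smul (c^-1)%:MP (term_vec j c b).
  apply/ffunP => l; rewrite !ffunE; case: (l == j); last by rewrite mulr0.
  by rewrite mul_mpolyC scalerA mulVf.
exact: span_smul.
Qed.

(* Multiplying a homogeneous g of squarefree degree c by x^(b-c) instead of
   x^(a-c), with b the squarefree part of a, moves the x^a coefficient of f g
   to x^b; this needs c <= a -> c <= b, i.e. that c is squarefree. *)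
Lemma mcoeff_smul_sqfree_part (g : V) c (f : S) (a : 'X_{1..n}) :
  homogeneous c g -> squarefree c ->
  exists h : S, forall l, (smul h g l)@_(sqfree_part a) = (smul f g l)@_a.
Proof.
move=> hg hc.
exists (if (c <= a)%MM then f@_(a - c)%MM *: 'X_[sqfree_part a - c] else 0) => l.
have [d gl] := hg l.
rewrite !ffunE gl -!scalerAr !mcoeffZ [(f * _)@__]mcoeffMXE; congr (_ * _).
case hca: (c <= a)%MM; last by rewrite mul0r mcoeff0.
by rewrite mcoeffMXE sqfree_part_ge // mcoeffZ mcoeffX eqxx mulr1.
Qed.

Lemma sqfree_part_transfer (v : V) (a : 'X_{1..n}) :
  is_submodule N -> generated_in_sqfree_degrees N -> N v ->
  exists w : V, N w /\ forall l, (w l)@_(sqfree_part a) = (v l)@_a.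
Proof.
move=> [h0 hD hZ] hgen /hgen [s [hs ->]] {v}.
elim: s hs => [|[f g] s IH] hs.
  by exists 0; split => // l; rewrite big_nil !ffunE !mcoeff0.
have [w [hw ew]] : exists w : V,
    N w /\ forall l, (w l)@_(sqfree_part a) = ((\sum_(p <- s) smul p.1 p.2) l)@_a.
  by apply: IH => p hp; apply: hs; rewrite inE hp orbT.
have [/= hg [c [hc hcg]]] := hs (f, g) (mem_head _ _).
have [h eh] := mcoeff_smul_sqfree_part f a hcg hc.
exists (smul h g + w); split; first exact: (hD _ _ (hZ _ _ hg) hw).
by move=> l; rewrite big_cons ffunE [in RHS]ffunE !mcoeffD ew eh.
Qed.

Lemma lead_pos_sqfree_lead_exp (v : V) (i : 'I_k) (a : 'X_{1..n}) :
  is_submodule N -> generated_in_sqfree_degrees N ->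
  N v -> is_lead_pos v (i, a) -> sqfree_lead_exp i (sqfree_part a).
Proof.
move=> hsub hgen hv [/= hva hmax].
have [w [hw ew]] := sqfree_part_transfer a hsub hgen hv.
split; first exact: sqfree_part_sqfree.
exists w; split => //; last by rewrite ew.
move=> l hl; rewrite ew; apply/eqP/negP => /negP hla.
have hne : (l, a) <> (i, a) by case=> eli; rewrite eli ltnn in hl.
case: (hmax (l, a) hla hne) => /= [hil|[_ [t [_]]]]; last by rewrite ltnn.
by move: (ltn_trans hl hil); rewrite ltnn.
Qed.

Lemma initial_module_monomial_ideal (w : V) j :
  is_submodule N -> generated_in_sqfree_degrees N ->
  initial_module N w -> monomial_ideal (sqfree_lead_exp j) (w j).
Proof.
move=> hsub hgen [s [hs ->]]; rewrite sum_ffunE big_seq.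
apply: big_ind; [exact: monomial_ideal0 | exact: monomial_idealD |].
move=> [f t] /hs [v [hv [_ [[i a] [hl /= ->]]]]] /=.
rewrite !ffunE; case: eqP => [->|_]; last by rewrite mulr0; exact: monomial_ideal0.
rewrite -scalerAr -mul_mpolyC mulrA.
apply: (monomial_ideal_multiple _ _ (sqfree_part_le a)).
exact: lead_pos_sqfree_lead_exp hv hl.
Qed.

Lemma monomial_ideal_initial_module_coord j (f : S) :
  fine_graded N -> monomial_ideal (sqfree_lead_exp j) f ->
  initial_module N [ffun l => if l == j then f else 0].
Proof.
move=> hfg [s [hs ->]].
have -> : [ffun l => if l == j then \sum_(p <- s) p.1 * 'X_[p.2] else 0] =
          \sum_(p <- s) smul p.1 (term_vec j 1 p.2).
  apply/ffunP => l; rewrite ffunE sum_ffunE.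
  have [->|hne] := eqVneq l j.
    by apply: eq_bigr => p _; rewrite !ffunE eqxx scale1r.
  by rewrite big1 // => p _; rewrite !ffunE (negbTE hne) mulr0.
apply: span_sum => p hp; apply: span_smul.
by apply: initial_module_term_vec => //; apply: hs.
Qed.

Lemma monomial_ideal_initial_module (w : V) :
  fine_graded N -> (forall j, monomial_ideal (sqfree_lead_exp j) (w j)) ->
  initial_module N w.
Proof.
move=> hfg hw.
have -> : w = \sum_j [ffun l => if l == j then w j else 0].
  apply/ffunP => l; rewrite sum_ffunE (bigD1 l) //= ffunE eqxx big1 ?addr0 //.
  by move=> j hj; rewrite ffunE eq_sym (negbTE hj).
by apply: span_sum => j _; apply: monomial_ideal_initial_module_coord.
Qed.

End InitialModule.

Theorem proposition4p10 (F : fieldType) (n k : nat) (N : vec F n k -> Prop) :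
  is_submodule N -> fine_graded N -> generated_in_sqfree_degrees N ->
  exists M : 'I_k -> ('X_{1..n} -> Prop),
    (forall j a, M j a -> squarefree a) /\
    (forall w : vec F n k,
       initial_module N w <-> forall j : 'I_k, monomial_ideal (M j) (w j)).
Proof.
move=> hsub hfg hgen; exists (sqfree_lead_exp N); split; first by move=> j a [].
move=> w; split; first by move=> hw j; exact: initial_module_monomial_ideal.
exact: monomial_ideal_initial_module.
Qed.
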